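(* For every $\mathcal W\in{\rm Gr}^{(0)}_+$ one has $\mathcal A_{\mathcal W}\cap\mathcal D_-=\{0\}$: the only Kac–Schwarz operator of $\mathcal W$ lying in $\mathcal D_-$ is $0$.
   Context: $H_+=\mathbb C[z]$, $H_-=z^{-1}\mathbb C[[z^{-1}]]$, $H=H_+\oplus H_-$. ${\rm Gr}^{(0)}_+$ is the set of closed subspaces $\mathcal W\subset H$ with $\pi_+:\mathcal W\to H_+$ (projection along $H_-$) an isomorphism. $\mathcal D=\mathbb C((z^{-1}))[[\partial_z]]$ is the ring of differential operators $\sum_{m\ge0}a_m(z)\partial_z^m$, $a_m\in H$, acting on $H$; $\mathcal D_\pm=H_\pm[[\partial_z]]$. The Kac–Schwarz algebra of $\mathcal W$ is $\mathcal A_{\mathcal W}=\{\mathtt A\in\mathcal D:\mathtt A\cdot\mathcal W\subset\mathcal W\}$. *)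

From HB Require Import structures.
From mathcomp Require Import all_boot all_order all_algebra.
From mathcomp Require Import boolp classical_sets fsbigop reals.
From mathcomp Require Import complex.
Set Implicit Arguments. Unset Strict Implicit. Unset Printing Implicit Defensive.
Import Order.TTheory GRing.Theory Num.Theory.
Local Open Scope ring_scope.
Local Open Scope classical_set_scope.

Section Sato.
Variable C : fieldType.

(* An element of H = C[z] (+) z^-1 C[[z^-1]] is a coefficient function
   f : int -> C (f n = coefficient of z^n) with support bounded above. *)
Definition inH (f : int -> C) : Prop := exists N : int, forall n, N < n -> f n = 0.

Definition inHplus (f : int -> C) : Prop := inH f /\ forall n : int, n < 0 -> f n = 0.

Definition inHminus (f : int -> C) : Prop := forall n : int, 0 <= n -> f n = 0.

Definition piplus (f : int -> C) : int -> C := fun n => if 0 <= n then f n else 0.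

Definition subspaceH (W : set (int -> C)) : Prop :=
  [/\ forall f, W f -> inH f,
      W (fun _ => 0),
      forall f g, W f -> W g -> W (fun n => f n + g n)
    & forall (c : C) f, W f -> W (fun n => c * f n)].

(* W is closed in the z^{-1}-adic topology of H = C((z^{-1})): the basic
   neighbourhoods of f are { g | g n = f n for all n >= N }, N : int. *)
Definition closedH (W : set (int -> C)) : Prop :=
  forall f, inH f ->
    (forall N : int, exists w, W w /\ forall n, N <= n -> w n = f n) -> W f.

Definition Gr0plus (W : set (int -> C)) : Prop :=
  [/\ subspaceH W, closedH W,
      (forall w1 w2, W w1 -> W w2 -> piplus w1 = piplus w2 -> w1 = w2)
    & (forall g, inHplus g -> exists w, W w /\ piplus w = g)].

Definition dz (f : int -> C) : int -> C := fun n => (n + 1)%:~R * f (n + 1).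

(* An operator A = sum_{m>=0} a_m(z) d_z^m is given by its coefficient
   sequence a : nat -> (int -> C), with a m = a_m. *)
Definition inDminus (a : nat -> int -> C) : Prop := forall m, inHminus (a m).

(* Action of A = sum_m a_m d^m on f:
   (A f)_n = sum_{m >= 0} sum_{j} (a_m)_j (d^m f)_{n-j}.
   For A in D_- (so (a_m)_j = 0 for j >= 0) this is written with j = -(k+1),
   k : nat; for f in H the family of terms is finitely supported, so the
   sum is a genuine finite sum (fsbig over finitely supported families). *)
Definition actD (a : nat -> int -> C) (f : int -> C) : int -> C :=
  fun n => \sum_(p \in [set: nat * nat])
             a p.1 (- (p.2.+1)%:Z) * iter p.1 dz f (n + (p.2.+1)%:Z).

Definition inKS (W : set (int -> C)) (a : nat -> int -> C) : Prop :=
  forall w, W w -> W (actD a w).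

End Sato.

Set Warnings "-all".
From HB Require Import structures.
From mathcomp Require Import all_boot all_order all_algebra.
From mathcomp Require Import boolp classical_sets fsbigop reals complex.
From mathcomp Require Import zify.
Import Order.TTheory GRing.Theory Num.Theory.
Local Open Scope ring_scope.
Local Open Scope classical_set_scope.

(* An operator A = sum_m a_m(z) d_z^m in D_- has coefficients
   c(m,k) := [z^{-(k+1)}] a_m, and by the definition of actD only these
   enter the action.  Order the pairs (m,k) by total degree m + k, then by m.
   For W in Gr^(0)_+ pick w in W with pi_+ w = z^d (it vanishes above d).
   If every coefficient below (d,k) vanishes, then
   - A w has no nonnegative coefficients (each surviving term involves w at
     an index > d), so A w = 0 because A w lies in W and pi_+ is injective;
   - the coefficient of z^{-(k+1)} in A w is c(d,k) * d! * w_d, since the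
     other terms of the same total degree either lie below (d,k) or apply
     d_z^m, m > d, at the index d - m, where the falling product vanishes.
   Hence c(d,k) * d! = 0, and c(d,k) = 0 in characteristic zero; well-founded
   induction kills all c(m,k), and the nonnegative coefficients of the a_m
   vanish by the definition of D_-. *)

Section DerivativePowers.
Variable C : fieldType.
Implicit Types (f : int -> C) (j D : int) (m d : nat).

Lemma iter_dz m f j :
  iter m (@dz C) f j = (\prod_(i < m) (j + (i.+1)%:Z)%:~R) * f (j + m%:Z).
Proof.
elim: m f j => [|m IH] f j; first by rewrite big_ord0 mul1r addr0.
rewrite iterSr IH /dz big_ord_recr /= -mulrA; congr (_ * (_ * f _)).
- congr (_%:~R); lia.
- lia.
Qed.

Lemma iter_dz_vanish_above m f D j :
  (forall j', D < j' -> f j' = 0) -> D < j + m%:Z -> iter m (@dz C) f j = 0.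
Proof. by move=> f_above lt_Dj; rewrite iter_dz f_above ?mulr0. Qed.

(* for m > d, the falling product at index d - m contains the factor 0 *)
Lemma iter_dz_at_neg m d f : (d < m)%N -> iter m (@dz C) f (d%:Z - m%:Z) = 0.
Proof.
move=> lt_dm; rewrite iter_dz.
have lt_i : (m - d - 1 < m)%N by lia.
rewrite (bigD1 (Ordinal lt_i)) //=.
have -> : d%:Z - m%:Z + (m - d - 1).+1%:Z = 0 by lia.
by rewrite !mul0r.
Qed.

Lemma iter_dz_at0 d f : iter d (@dz C) f 0 = d`!%:R * f d%:Z.
Proof.
rewrite iter_dz add0r; congr (_ * _).
rewrite fact_prod big_add1 /= big_mkord natr_prod; apply: eq_bigr => i _.
by rewrite add0r.
Qed.

End DerivativePowers.

Section ActionOfDminus.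
Context {C : fieldType} (a : nat -> int -> C).

Definition coefD (p : nat * nat) : C := a p.1 (- (p.2.+1)%:Z).

Definition lower_order (p q : nat * nat) : bool :=
  (p.1 + p.2 < q.1 + q.2)%N || (p.1 + p.2 == q.1 + q.2) && (p.1 < q.1)%N.

Lemma actD_vanish_above (s : nat) (w : int -> C) (D n : int) :
  (forall p, (p.1 + p.2 < s)%N -> coefD p = 0) ->
  (forall j, D < j -> w j = 0) -> D < n + s.+1%:Z -> actD a w n = 0.
Proof.
move=> low w_above lt_Dn; apply: fsbig1 => -[m k] _ /=.
case: (ltnP (m + k) s) => [lt_s | ge_s].
  by rewrite -[a m _]/(coefD (m, k)) low ?mul0r.
by rewrite (@iter_dz_vanish_above _ m w D) ?mulr0 //; lia.
Qed.

Lemma actD_leading_coef (d k : nat) (w : int -> C) :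
  (forall p, lower_order p (d, k) -> coefD p = 0) ->
  (forall j, d%:Z < j -> w j = 0) ->
  actD a w (- (k.+1)%:Z) = coefD (d, k) * (d`!%:R * w d%:Z).
Proof.
move=> low w_above; rewrite /actD -(fsbig_widen [set (d, k)]) //; last first.
  move=> -[m k'] [_ /= ne_dk]; rewrite /preimage /=.
  case: (ltngtP (m + k') (d + k)) => [lt_s | gt_s | eq_s].
  - by rewrite -[a m _]/(coefD (m, k')) low ?mul0r // /lower_order lt_s.
  - by rewrite (@iter_dz_vanish_above _ m w d%:Z) ?mulr0 //; lia.
  case: (ltngtP m d) => [lt_md | gt_md | eq_md].
  - by rewrite -[a m _]/(coefD (m, k')) low ?mul0r // /lower_order /=; lia.
  - rewrite (_ : _ + _ = d%:Z - m%:Z); last by lia.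
    by rewrite iter_dz_at_neg // mulr0.
  - by exfalso; apply: ne_dk; congr pair; lia.
rewrite fsbig_set1 /=; have -> : - (k.+1)%:Z + (k.+1)%:Z = 0 by lia.
by rewrite iter_dz_at0.
Qed.

End ActionOfDminus.

Lemma lower_order_ind (P : nat * nat -> Prop) :
  (forall q, (forall p, lower_order p q -> P p) -> P q) -> forall q, P q.
Proof.
move=> step; suff PS s d k : (d + k)%N = s -> P (d, k) by move=> [d k]; apply: PS.
elim/ltn_ind: s d k => s IHs d; elim/ltn_ind: d => d IHd k eq_s.
apply: step => -[m k'] /orP[lt_s | /andP[/eqP eq_s' lt_m]] /=.
- by apply: (IHs (m + k')%N); rewrite -?eq_s.
- by apply: IHd => //; rewrite -eq_s; exact: eq_s'.
Qed.

Section KacSchwarzDminus.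
Context {C : numFieldType} {W : set (int -> C)}.
Hypothesis W_Gr : Gr0plus W.

(* surjectivity of pi_+: W contains a lift of z^d, which vanishes above d *)
Lemma Gr0plus_monomial (d : nat) :
  exists w, [/\ W w, w d%:Z = 1 & forall j, d%:Z < j -> w j = 0].
Proof.
have [_ _ _ W_onto] := W_Gr.
have zd_poly : inHplus (fun n : int => if n == d%:Z then (1 : C) else 0).
  split; first by exists d%:Z => n lt_dn; case: eqP => // e; lia.
  by move=> n lt_n0; case: eqP => // e; lia.
have [w [Ww piw]] := W_onto _ zd_poly; exists w; split => //.
  by have := congr1 (fun f => f d%:Z) piw; rewrite /piplus /= eqxx.
move=> j lt_dj; have := congr1 (fun f => f j) piw; rewrite /piplus /= ifT; last by lia.
by case: eqP => // e; lia.
Qed.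

(* injectivity of pi_+: an element of W with no nonnegative part is 0 *)
Lemma Gr0plus_piplus_eq0 (v : int -> C) :
  W v -> (forall n, 0 <= n -> v n = 0) -> v = (fun _ => 0).
Proof.
have [[_ W0 _ _] _ W_inj _] := W_Gr => Wv v_pos; apply: W_inj => //.
by apply/funext => n; rewrite /piplus; case: ifP => // /v_pos.
Qed.

Lemma KacSchwarz_coefD_eq0 {a : nat -> int -> C} :
  inKS W a -> forall p, coefD a p = 0.
Proof.
move=> a_KS; elim/lower_order_ind => -[d k] low.
have [w [Ww wd1 w_above]] := Gr0plus_monomial d.
have Aw0 : actD a w = (fun _ => 0).
  apply: Gr0plus_piplus_eq0; first exact: a_KS.
  move=> n n_ge0; apply: (@actD_vanish_above _ a (d + k) w d%:Z _ _ w_above).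
    by move=> p lt_s; apply: low; rewrite /lower_order lt_s.
  by lia.
have := actD_leading_coef a d k w low w_above; rewrite Aw0 wd1 mulr1 => /esym/eqP.
by rewrite mulf_eq0 pnatr_eq0 gtn_eqF ?fact_gt0 // orbF => /eqP.
Qed.

End KacSchwarzDminus.

Theorem mainTheorem3 (R : realType) (W : set (int -> R[i])) (a : nat -> int -> R[i]) :
  Gr0plus W -> inDminus a -> inKS W a -> a = (fun _ _ => 0).
Proof.
move=> W_Gr a_minus a_KS; apply/funext => m; apply/funext => -[n | k].
- exact: a_minus.
- by rewrite NegzE; exact: (KacSchwarz_coefD_eq0 W_Gr a_KS (m, k)).
Qed.
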